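(* Let $k\in\omega\setminus\{0,1\}$, let $A$ be a nontrivial closed class of decision tables from $\mathcal M_k^\infty$, $\psi$ a bounded complexity measure, and suppose the function $L_{\psi,A}$ is everywhere defined. Then for every $n\in\omega$ with $L_{\psi,A}(n)>0$, the value $\mathcal H^\infty_{\psi,A}(n)$ is defined and $\mathcal H^\infty_{\psi,A}(n)\ge\log_k L_{\psi,A}(n)$.
   Context: Notation: $\omega=\{0,1,2,\dots\}$; $\mathcal P(\omega)$ is the set of nonempty finite subsets of $\omega$; for $k\in\omega\setminus\{0,1\}$, $E_k=\{0,1,\dots,k-1\}$. $P=\{f_i:i\in\omega\}$ is a set of attributes, $f_i\neq f_j$ for $i\ne j$. Decision tables: $\mathcal M_k^\infty$ is the set of rectangular tables filled with numbers from $E_k$, whose columns are labeled with pairwise different attributes from $P$, whose rows are pairwise different, and each row of which is labeled with a set from $\mathcal P(\omega)$ (its set of decisions). The empty table (no rows) is denoted $\Lambda$ and belongs to $\mathcal M_k^\infty$. For $T\in\mathcal M_k^\infty$: $\Delta(T)$ is the set of rows; $\Pi(T)$ is the intersection of the decision sets of all rows (common decisions); $\mathrm{At}(T)$ is the set of attributes labeling columns. For nonempty $T$, $\Omega_k(T)$ is the set of finite words (including the empty word $\lambda$) over the alphabet $\{(f_i,\delta):f_i\in\mathrm{At}(T),\delta\in E_k\}$; for $\alpha=(f_{i_1},\delta_1)\cdots(f_{i_m},\delta_m)$, $T\alpha$ is the subtable of $T$ consisting of the rows having value $\delta_j$ in the column $f_{i_j}$ for all $j$, and $T\lambda=T$.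 Operations: for $D\subseteq\mathrm{At}(T)$, $I(D,T)$ is obtained from $T$ by deleting the columns labeled with attributes from $D$ and, in each group of rows coinciding on the remaining columns, keeping only the first row; $I(\mathrm{At}(T),T)=\Lambda$. For $\nu:E_k^{|\mathrm{At}(T)|}\to\mathcal P(\omega)$, $J(\nu,T)$ is obtained by replacing the decision set of each row $\bar\delta$ by $\nu(\bar\delta)$. $[T]=\{J(\nu,I(D,T)):D\subseteq\mathrm{At}(T),\ \nu:E_k^{|\mathrm{At}(T)\setminus D|}\to\mathcal P(\omega)\}$; for nonempty $A\subseteq\mathcal M_k^\infty$, $[A]=\bigcup_{T\in A}[T]$. $A$ is a closed class if $[A]=A$; nontrivial if it contains a nonempty table. Decision trees: a $k$-decision tree is a finite directed rooted tree with at least two nodes in which the root and the edges leaving the root are unlabeled, each terminal node is labeled with a decision from $\omega$, and each other node is labeled with an attribute from $P$, each edge leaving such a node being labeled with a number from $E_k$. $\mathrm{At}(\Gamma)$ is the set of attributes labeling nodes of $\Gamma$. For a complete path $\tau=v_1,d_1,\dots,v_m,d_m,v_{m+1}$ (from the root to a terminal node), $\pi(\tau)=\lambda$ if $m=1$, and otherwise $\pi(\tau)=(f_{i_2},\delta_2)\cdots(f_{i_m},\delta_m)$ where $v_j$ is labeled $f_{i_j}$ and $d_j$ is labeled $\delta_j$; $T(\tau)=T\pi(\tau)$. For $T\ne\Lambda$, a nondeterministic decision tree for $T$ is a $k$-decision tree $\Gamma$ with $\mathrm{At}(\Gamma)\subseteq\mathrm{At}(T)$ such that every row of $T$ belongs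 to $T(\tau)$ for some complete path $\tau$, and for every complete path $\tau$ either $T(\tau)=\Lambda$ or the decision at the terminal node of $\tau$ belongs to $\Pi(T(\tau))$. A deterministic decision tree for $T$ is a nondeterministic decision tree for $T$ in which, additionally, exactly one edge leaves the root and the edges leaving any node that is neither the root nor terminal are labeled with pairwise different numbers. Complexity measures: a partially bounded complexity measure is a function $\psi:P^*\to\omega$ on finite words over $P$ such that for all words $\alpha_1,\alpha_2$: $\psi(\alpha_1)=0$ iff $\alpha_1=\lambda$; $\psi(\alpha_1)$ is invariant under permutation of letters; $\psi(\alpha_1)\le\psi(\alpha_1\alpha_2)$; $\psi(\alpha_1\alpha_2)\le\psi(\alpha_1)+\psi(\alpha_2)$. It is bounded if in addition $\psi(\alpha)\ge|\alpha|$ for all $\alpha$. $\psi$ is extended to words $(f_{i_1},\delta_1)\cdots(f_{i_m},\delta_m)$ by $\psi(f_{i_1}\cdots f_{i_m})$ ($\psi(\lambda)=0$). For a $k$-decision tree $\Gamma$, $\psi(\Gamma)=\max_\tau\psi(\pi(\tau))$ over complete paths. For $T\ne\Lambda$, $\psi^d(T)$ (resp. $\psi^a(T)$) is the minimum of $\psi(\Gamma)$ over deterministic (resp. nondeterministic) decision trees $\Gamma$ for $T$; $\psi^d(\Lambda)=\psi^a(\Lambda)=0$. Covers: for $T\ne\Lambda$ and $n\in\omega$, $\Omega_k^n(T)=\{\alpha\in\Omega_k(T):\psi(\alpha)\le n\}$. A finite set $U\subseteq\Omega_k^n(T)$ is a $(\psi,n)$-cover of $T$ if $\bigcup_{\alpha\in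 U}\Delta(T\alpha)=\Delta(T)$; it is irreducible if no proper subset of $U$ is a $(\psi,n)$-cover of $T$. $l_\psi(T,n)$ is the maximum cardinality of an irreducible $(\psi,n)$-cover of $T$; $l_\psi(\Lambda,n)=0$. $L_{\psi,A}(n)$ is undefined if $\{l_\psi(T,n):T\in A\}$ is infinite, and otherwise equals its maximum. $\mathcal H^\infty_{\psi,A}(n)$ is undefined if $\{\psi^d(T):T\in A,\ \psi^a(T)\le n\}$ is infinite, and otherwise equals its maximum. *)

From Stdlib Require Import Rdefinitions Raxioms Rpower.
From mathcomp Require Import all_boot.
From Stdlib Require List.

Set Implicit Arguments.
Unset Strict Implicit.
Unset Printing Implicit Defensive.

(* Attributes f_i are represented by their index i : nat; a word over P
   is a seq nat; numbers of E_k are nats < k. *)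

Definition bounded_measure (psi : seq nat -> nat) : Prop :=
  [/\ forall a, psi a = 0 <-> a = [::],
      forall a b, perm_eq a b -> psi a = psi b,
      forall a b, psi a <= psi (a ++ b),
      forall a b, psi (a ++ b) <= psi a + psi b
    & forall a, size a <= psi a].

(* columns: list of attribute indices; rows: (values, decision set).
   Decision sets (nonempty finite subsets of omega) are represented
   canonically as nonempty strictly increasing lists. *)
Record table := Table { tattrs : seq nat ; trows : seq (seq nat * seq nat) }.

Definition empty_table : table := Table [::] [::].

Definition dec_set (d : seq nat) : Prop := d != [::] /\ sorted ltn d.

Definition wf_table (k : nat) (T : table) : Prop :=
  [/\ uniq (tattrs T),
      (tattrs T == [::]) = (trows T == [::]),
      uniq (map fst (trows T))
    & forall r, r \in trows T ->
        [/\ size r.1 = size (tattrs T), all (fun x => x < k) r.1 & dec_set r.2]].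

Definition colval (T : table) (r : seq nat) (f : nat) : nat :=
  nth 0 r (index f (tattrs T)).

Definition sat (T : table) (alpha : seq (nat * nat)) (r : seq nat) : bool :=
  all (fun l => colval T r l.1 == l.2) alpha.

Definition subrows (T : table) (alpha : seq (nat * nat)) :=
  [seq r <- trows T | sat T alpha r.1].

Definition common (rs : seq (seq nat * seq nat)) (d : nat) : bool :=
  all (fun r => d \in r.2) rs.

Fixpoint dedup_first (seen : seq (seq nat)) (rs : seq (seq nat * seq nat)) :=
  match rs with
  | [::] => [::]
  | r :: rs' => if r.1 \in seen then dedup_first seen rs'
                else r :: dedup_first (r.1 :: seen) rs'
  end.

Definition I_op (D : seq nat) (T : table) : table :=
  let m := [seq a \notin D | a <- tattrs T] in
  let attrs' := mask m (tattrs T) in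
  if attrs' == [::] then empty_table
  else Table attrs' (dedup_first [::] [seq (mask m r.1, r.2) | r <- trows T]).

Definition J_op (nu : seq nat -> seq nat) (T : table) : table :=
  Table (tattrs T) [seq (r.1, nu r.1) | r <- trows T].

Definition closure_of (T T' : table) : Prop :=
  exists (D : seq nat) (nu : seq nat -> seq nat),
    [/\ {subset D <= tattrs T}, (forall x, dec_set (nu x)) & T' = J_op nu (I_op D T)].

Definition closed_class (k : nat) (A : table -> Prop) : Prop :=
  (forall T, A T -> wf_table k T) /\
  (forall T', A T' <-> exists T, A T /\ closure_of T T').

Definition nontrivial (A : table -> Prop) : Prop :=
  exists T, A T /\ trows T <> [::].

(* non-root nodes: terminal (decision) or attribute node with labelled
   outgoing edges; a tree is the nonempty list of children of the root. *)
Inductive node : Type :=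
| Leaf : nat -> node
| Query : nat -> seq (nat * node) -> node.

Fixpoint node_paths (v : node) : seq (seq (nat * nat) * nat) :=
  match v with
  | Leaf d => [:: ([::], d)]
  | Query f ch =>
      flatten (map (fun '(delta, c) =>
                 map (fun p => ((f, delta) :: p.1, p.2)) (node_paths c)) ch)
  end.

Inductive node_ok (k : nat) (At : seq nat) (det : bool) : node -> Prop :=
| NOLeaf d : node_ok k At det (Leaf d)
| NOQuery f ch :
    f \in At -> ch <> [::] -> (det -> uniq (map fst ch)) ->
    (forall delta c, List.In (delta, c) ch -> delta < k /\ node_ok k At det c) ->
    node_ok k At det (Query f ch).

Definition tree_paths (G : seq node) := flatten (map node_paths G).

(* k-decision tree with At(G) included in At; det = deterministic *)
Definition tree_ok (k : nat) (At : seq nat) (det : bool) (G : seq node) : Prop :=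
  [/\ G <> [::], (det -> size G = 1) & forall v, List.In v G -> node_ok k At det v].

Definition tree_cost (psi : seq nat -> nat) (G : seq node) : nat :=
  \max_(p <- tree_paths G) psi (map fst p.1).

Definition dec_tree (k : nat) (det : bool) (T : table) (G : seq node) : Prop :=
  [/\ tree_ok k (tattrs T) det G,
      forall r, r \in trows T -> exists2 p, p \in tree_paths G & sat T p.1 r.1
    & forall p, p \in tree_paths G -> subrows T p.1 = [::] \/ common (subrows T p.1) p.2].

Definition is_max (S : nat -> Prop) (m : nat) : Prop :=
  S m /\ forall x, S x -> x <= m.

(* psi_opt k psi true T v  <->  psi^d(T) = v ;
   psi_opt k psi false T v <->  psi^a(T) = v *)
Definition psi_opt (k : nat) (psi : seq nat -> nat) (det : bool) (T : table) (v : nat) : Prop :=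
  (trows T = [::] /\ v = 0) \/
  [/\ trows T <> [::],
      exists G, dec_tree k det T G /\ tree_cost psi G = v
    & forall G, dec_tree k det T G -> v <= tree_cost psi G].

Definition in_Omega_n (k : nat) (psi : seq nat -> nat) (T : table) (n : nat)
  (alpha : seq (nat * nat)) : bool :=
  all (fun l => (l.1 \in tattrs T) && (l.2 < k)) alpha && (psi (map fst alpha) <= n).

(* finite sets of words represented by duplicate-free lists *)
Definition is_cover k psi T n (U : seq (seq (nat * nat))) : Prop :=
  all (in_Omega_n k psi T n) U /\
  forall r, r \in trows T -> exists2 alpha, alpha \in U & sat T alpha r.1.

Definition irr_cover k psi T n (U : seq (seq (nat * nat))) : Prop :=
  is_cover k psi T n U /\
  forall U', {subset U' <= U} -> ~ {subset U <= U'} -> ~ is_cover k psi T n U'.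

(* l_val k psi T n v  <->  l_psi(T,n) = v *)
Definition l_val (k : nat) (psi : seq nat -> nat) (T : table) (n v : nat) : Prop :=
  (trows T = [::] /\ v = 0) \/
  (trows T <> [::] /\
   is_max (fun s => exists U, [/\ uniq U, irr_cover k psi T n U & size U = s]) v).

(* L_{psi,A}(n) is defined and equals m *)
Definition L_val k psi (A : table -> Prop) (n m : nat) : Prop :=
  is_max (fun v => exists T, A T /\ l_val k psi T n v) m.

(* H^infty_{psi,A}(n) is defined and equals h *)
Definition H_val k psi (A : table -> Prop) (n h : nat) : Prop :=
  is_max (fun v => exists T, [/\ A T, (exists a, psi_opt k psi false T a /\ a <= n)
                                 & psi_opt k psi true T v]) h.

Definition log_base (k x : nat) : R := Rdiv (ln (INR x)) (ln (INR k)).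

(* Take T in A and an irreducible (psi, n)-cover U = [a_0; ...; a_(m-1)] of T with
   m = L(n).  Relabelling every row of T by the set of indices of the words of U it
   satisfies gives a table T' of A.  The words of U, read as single-path branches, form
   a nondeterministic tree for T' of complexity at most n.  By irreducibility each a_i
   has a private row, whose new decision set is exactly {i}; hence a deterministic tree
   for T' has at least m complete paths, so with branching at most k its depth, and a
   fortiori its psi-complexity, is at least log_k m.
   H(n) is defined because psi^a(T) <= n forces psi^d(T) <= L(n) * n for every T in A:
   an irreducible subcover of the paths of an optimal nondeterministic tree has at most
   L(n) words, and querying all their attributes in turn is a deterministic tree whose
   complexity is bounded by subadditivity of psi. *)

From Stdlib Require Import Reals Lra ClassicalEpsilon.
From mathcomp Require Import all_boot.

Set Implicit Arguments.
Unset Strict Implicit.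
Unset Printing Implicit Defensive.

Lemma INR_expn k h : INR (k ^ h) = pow (INR k) h.
Proof. by elim: h => //= h IH; rewrite expnS mult_INR IH. Qed.

Lemma log_base_le k m h : 1 < k -> 0 < m -> m <= k ^ h -> Rle (log_base k m) (INR h).
Proof.
move=> k_gt1 m_gt0 m_le; rewrite /log_base.
have k_gt1R : Rlt 1 (INR k) by apply: (lt_INR 1); apply/ltP.
have m_gt0R : Rlt 0 (INR m) by apply: (lt_INR 0); apply/ltP.
have lnk_gt0 : Rlt 0 (ln (INR k)) by rewrite -ln_1; apply: ln_increasing; lra.
have lnm_le : Rle (ln (INR m)) (INR h * ln (INR k)).
  rewrite -ln_pow; last lra.
  rewrite -INR_expn; case: ltngtP m_le => // [m_lt|->] _; last exact: Rle_refl.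
  by apply/Rlt_le/ln_increasing => //; apply/lt_INR/ltP.
apply: (Rmult_le_reg_r (ln (INR k))) => //.
by rewrite /Rdiv Rmult_assoc Rinv_l; lra.
Qed.

Definition asbool (P : Prop) : bool :=
  if excluded_middle_informative P then true else false.

Lemma asboolP (P : Prop) : reflect P (asbool P).
Proof. by rewrite /asbool; case: excluded_middle_informative => ?; constructor. Qed.

Lemma ex_is_max (P : nat -> Prop) b :
  (exists x, P x) -> (forall x, P x -> x <= b) -> exists h, is_max P h.
Proof.
move=> [x Px] ub.
have exP : exists x, asbool (P x) by exists x; apply/asboolP.
case: (@ex_maxnP _ b exP) => [y /asboolP /ub //|h /asboolP Ph hmax].
by exists h; split => // y /asboolP /hmax.
Qed.

Lemma ex_least (P : nat -> Prop) :
  (exists x, P x) -> exists2 x, P x & forall y, P y -> x <= y.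
Proof.
move=> [x Px]; have exP : exists x, asbool (P x) by exists x; apply/asboolP.
case: (ex_minnP exP) => h /asboolP Ph hmin.
by exists h => // y /asboolP /hmin.
Qed.

Lemma InP (T : eqType) (x : T) s : reflect (List.In x s) (x \in s).
Proof.
elim: s => [|y s IH]; first by constructor.
rewrite in_cons; apply: (iffP orP) => [[/eqP->|/IH]|[->|/IH]]; by [left|right|left|right].
Qed.

Lemma sumn_map_leq (I : Type) (s : seq I) (F : I -> nat) b :
  (forall x, List.In x s -> F x <= b) -> sumn (map F s) <= size s * b.
Proof.
elim: s => [|x s IH] //= Fb; rewrite mulSn leq_add ?Fb ?IH //; first by left.
by move=> y sy; apply: Fb; right.
Qed.

(* The automatically generated induction principle ignores the nested children. *)
Definition node_nested_ind (P : node -> Prop) (HL : forall d, P (Leaf d))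
  (HQ : forall f ch, (forall d c, List.In (d, c) ch -> P c) -> P (Query f ch)) :
  forall v, P v :=
  fix rec v := match v with
  | Leaf d => HL d
  | Query f ch => HQ f ch
     ((fix go (ch : seq (nat * node)) : forall d c, List.In (d, c) ch -> P c :=
        match ch with
        | nil => fun d c H => False_ind _ H
        | cons (d', c') xs => fun d c H =>
            match H with
            | or_introl e => eq_ind c' P (rec c') c (f_equal snd e)
            | or_intror h => go xs d c h
            end
        end) ch)
  end.

Lemma node_paths_Query_cons f d c ch :
  node_paths (Query f ((d, c) :: ch)) =
  [seq ((f, d) :: p.1, p.2) | p <- node_paths c] ++ node_paths (Query f ch).
Proof. by []. Qed.

Lemma node_paths_QueryP f ch p : p \in node_paths (Query f ch) ->
  exists d c q, [/\ List.In (d, c) ch, q \in node_paths c & p = ((f, d) :: q.1, q.2)].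
Proof.
elim: ch => [|[d c] ch IH] //; rewrite node_paths_Query_cons mem_cat.
case/orP => [/mapP [q q_c ->]|/IH [d' [c' [q [ch_c' q_c' ->]]]]].
  by exists d, c, q; split => //; left.
by exists d', c', q; split => //; right.
Qed.

Lemma mem_node_paths_Query f ch d c q : List.In (d, c) ch -> q \in node_paths c ->
  ((f, d) :: q.1, q.2) \in node_paths (Query f ch).
Proof.
elim: ch => [|[d' c'] ch IH] // [[-> ->]|ch_c] q_c; rewrite node_paths_Query_cons mem_cat.
  by rewrite map_f.
by rewrite IH ?orbT.
Qed.

Lemma size_node_paths_Query f ch :
  size (node_paths (Query f ch)) = sumn [seq size (node_paths x.2) | x <- ch].
Proof.
by elim: ch => [|[d c] ch IH] //; rewrite node_paths_Query_cons size_cat size_map IH.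
Qed.

Lemma tree_paths_cons v G : tree_paths (v :: G) = node_paths v ++ tree_paths G.
Proof. by []. Qed.

Lemma tree_paths1 v : tree_paths [:: v] = node_paths v.
Proof. exact: cats0. Qed.

Lemma tree_pathsP G p : p \in tree_paths G -> exists2 v, List.In v G & p \in node_paths v.
Proof.
elim: G => [|v G IH] //; rewrite tree_paths_cons mem_cat.
by case/orP => [p_v|/IH [w G_w p_w]]; [exists v; first left | exists w; first right].
Qed.

Lemma node_ok_QueryP k At det f ch : node_ok k At det (Query f ch) ->
  [/\ f \in At, ch <> [::], det -> uniq (map fst ch)
     & forall d c, List.In (d, c) ch -> d < k /\ node_ok k At det c].
Proof. by move=> ok_v; inversion ok_v. Qed.

Definition word_over (k : nat) (At : seq nat) (w : seq (nat * nat)) : bool :=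
  all (fun l => (l.1 \in At) && (l.2 < k)) w.

Lemma word_over_attrs k At w : word_over k At w -> {subset map fst w <= At}.
Proof. by move=> /allP w_over _ /mapP [l /w_over /andP [At_l _] ->]. Qed.

Lemma node_paths_word_over k At det v p :
  node_ok k At det v -> p \in node_paths v -> word_over k At p.1.
Proof.
elim/node_nested_ind: v p => [d|f ch IH] p ok_v /=; first by rewrite inE => /eqP ->.
case/node_ok_QueryP: ok_v => At_f _ _ ok_ch /node_paths_QueryP [d [c [q [ch_c q_c ->]]]].
have [d_lt ok_c] := ok_ch _ _ ch_c.
by have := IH _ _ ch_c q ok_c q_c; rewrite /word_over /= At_f d_lt.
Qed.

Lemma tree_paths_word_over k At det G p :
  tree_ok k At det G -> p \in tree_paths G -> word_over k At p.1.
Proof.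
by case=> _ _ ok_G /tree_pathsP [v G_v p_v]; apply: node_paths_word_over (ok_G _ G_v) p_v.
Qed.

Lemma size_node_paths_det k At v L : 0 < k -> node_ok k At true v ->
  (forall p, p \in node_paths v -> size p.1 <= L) -> size (node_paths v) <= k ^ L.
Proof.
move=> k_gt0; elim/node_nested_ind: v L => [d|f ch IH] L ok_v L_ub.
  by rewrite expn_gt0 k_gt0.
case/node_ok_QueryP: ok_v => _ _ /(_ isT) uniq_ch ok_ch; rewrite size_node_paths_Query.
case: L L_ub => [|L] L_ub.
  apply: leq_trans (sumn_map_leq (b := 0) _) _; rewrite ?muln0 // => -[d c] /= ch_c.
  case E: (node_paths c) => [|q qs] //.
  have q_c : q \in node_paths c by rewrite E mem_head.
  by have := L_ub _ (mem_node_paths_Query f ch_c q_c).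
apply: leq_trans (sumn_map_leq (b := k ^ L) _) _.
  move=> [d c] /= ch_c; have [_ ok_c] := ok_ch _ _ ch_c.
  apply: (IH d c ch_c) => // q q_c.
  by have := L_ub _ (mem_node_paths_Query f ch_c q_c).
rewrite expnS leq_mul2r -(size_map fst) -[X in _ <= X](size_iota 0); apply/orP; right.
apply: uniq_leq_size uniq_ch _ => _ /InP /List.in_map_iff [[d c] [/= <- ch_c]].
by rewrite mem_iota; case: (ok_ch _ _ ch_c).
Qed.

Fixpoint query_tree (k : nat) (dec : seq (nat * nat) -> nat) (F : seq nat)
    (pre : seq (nat * nat)) : node :=
  match F with
  | [::] => Leaf (dec pre)
  | f :: F' => Query f [seq (d, query_tree k dec F' (rcons pre (f, d))) | d <- iota 0 k]
  end.

Lemma query_tree_paths k dec F pre p : p \in node_paths (query_tree k dec F pre) ->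
  map fst p.1 = F /\ p.2 = dec (pre ++ p.1).
Proof.
elim: F pre p => [|f F IH] pre p /=; first by rewrite inE => /eqP -> /=; rewrite cats0.
case/node_paths_QueryP => d [c [q [/List.in_map_iff [d' [[<- <-] _]] q_c ->]]] /=.
by have [-> ->] := IH _ _ q_c; rewrite cat_rcons.
Qed.

Lemma mem_query_tree_paths k dec F pre w : map fst w = F -> all (fun l => l.2 < k) w ->
  (w, dec (pre ++ w)) \in node_paths (query_tree k dec F pre).
Proof.
elim: F pre w => [|f F IH] pre [|[f' d] w] //=; first by rewrite cats0 mem_head.
case=> -> w_F /andP [d_lt w_lt]; rewrite -cat_rcons.
apply: (mem_node_paths_Query f (d := d) _ (IH _ _ w_F w_lt)).
by apply/List.in_map_iff; exists d; split => //; apply/InP; rewrite mem_iota.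
Qed.

Lemma query_tree_ok k At dec F pre : 0 < k -> {subset F <= At} ->
  node_ok k At true (query_tree k dec F pre).
Proof.
move=> k_gt0; elim: F pre => [|f F IH] pre F_At /=; constructor.
- by rewrite F_At ?mem_head.
- by rewrite -(prednK k_gt0).
- by rewrite -map_comp map_id iota_uniq.
- move=> d c /List.in_map_iff [d' [[<- <-] /InP d_k]]; split; first by rewrite mem_iota in d_k.
  by apply: IH => x F_x; rewrite F_At // in_cons F_x orbT.
Qed.

Definition cover_attrs (U : seq (seq (nat * nat))) : seq nat :=
  flatten [seq map fst a | a <- U].

Lemma mem_cover_attrs U a f : a \in U -> f \in map fst a -> f \in cover_attrs U.
Proof. by move=> U_a a_f; apply/flattenP; exists (map fst a); rewrite ?map_f. Qed.

Lemma psi_cover_attrs_le psi U n : bounded_measure psi ->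
  (forall a, a \in U -> psi (map fst a) <= n) -> psi (cover_attrs U) <= size U * n.
Proof.
case=> psi0 _ _ psi_sub _; elim: U => [|a U IH] U_n; first by have [_ ->] := psi0 [::].
rewrite /cover_attrs /= mulSn; apply: leq_trans (psi_sub _ _) _.
by rewrite leq_add ?U_n ?mem_head ?IH // => b U_b; rewrite U_n ?in_cons ?U_b ?orbT.
Qed.

Definition common_dec (T : table) (w : seq (nat * nat)) : nat :=
  if subrows T w is r :: _ then nth 0 r.2 (find (common (subrows T w)) r.2) else 0.

Lemma common_decP T w d : common (subrows T w) d -> common (subrows T w) (common_dec T w).
Proof.
rewrite /common_dec; case: (subrows T w) => [|r rs] // rs_d.
by apply: nth_find; apply/hasP; exists d; case/andP: (rs_d).
Qed.

Lemma colval_lt k T r f : wf_table k T -> r \in trows T -> f \in tattrs T ->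
  colval T r.1 f < k.
Proof.
case=> _ _ _ wf_rows T_r At_f; have [size_r r_lt _] := wf_rows _ T_r.
by apply: (allP r_lt); apply: mem_nth; rewrite size_r index_mem.
Qed.

Lemma sat_refine T w a x y : {subset map fst a <= map fst w} ->
  sat T w x -> sat T w y -> sat T a x -> sat T a y.
Proof.
move=> a_w /allP w_x /allP w_y /allP a_x; apply/allP => l a_l.
have /mapP [l' w_l' l_l'] := a_w _ (map_f fst a_l).
have := a_x _ a_l; rewrite l_l'.
by move: (w_x _ w_l') (w_y _ w_l') => /eqP -> /eqP ->.
Qed.

Section TreeOfCover.

Variables (k : nat) (psi : seq nat -> nat) (T : table) (U : seq (seq (nat * nat))).
Hypotheses (k_gt0 : 0 < k) (wf_T : wf_table k T).
Hypothesis U_At : forall a, a \in U -> {subset map fst a <= tattrs T}.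
Hypothesis U_cover : forall r, r \in trows T -> exists2 a, a \in U & sat T a r.1.
Hypothesis U_common : forall a, a \in U -> exists d, common (subrows T a) d.

Let F := cover_attrs U.
Let G := [:: query_tree k (common_dec T) F [::]].

Lemma cover_attrs_word_common w : map fst w = F -> exists d, common (subrows T w) d.
Proof.
move=> w_F; case E: (subrows T w) => [|r0 rs]; first by exists 0.
have : r0 \in subrows T w by rewrite E mem_head.
rewrite mem_filter => /andP [w_r0 T_r0].
have [a U_a a_r0] := U_cover T_r0; have [d a_d] := U_common U_a.
exists d; rewrite -E; apply/allP => r; rewrite mem_filter => /andP [w_r T_r].
apply: (allP a_d); rewrite mem_filter T_r andbT.
by apply: sat_refine w_r0 w_r a_r0 => f a_f; rewrite w_F (mem_cover_attrs U_a).
Qed.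

Lemma dec_tree_cover_attrs : dec_tree k true T G.
Proof.
split.
- split => // v [<-|//]; apply: query_tree_ok => // f /flattenP [_ /mapP [a U_a ->]].
  exact: U_At.
- move=> r T_r; pose w := [seq (f, colval T r.1 f) | f <- F].
  exists (w, common_dec T ([::] ++ w)); last by rewrite /sat all_map; apply/allP => f _ /=.
  rewrite tree_paths1 mem_query_tree_paths // -?map_comp ?map_id // all_map.
  apply/allP => f /flattenP [_ /mapP [a U_a ->] a_f] /=.
  exact: colval_lt wf_T T_r (U_At U_a a_f).
- move=> p; rewrite tree_paths1 => /query_tree_paths [p_F ->]; right.
  by have [d] := cover_attrs_word_common p_F; apply: common_decP.
Qed.

Lemma tree_cost_cover_attrs : tree_cost psi G <= psi F.
Proof. by apply/bigmax_leqP_seq => p; rewrite tree_paths1 => /query_tree_paths [-> _]. Qed.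

End TreeOfCover.

Lemma psi_opt_exists k psi det T : (exists G, dec_tree k det T G) ->
  exists v, psi_opt k psi det T v.
Proof.
move=> [G T_G]; case: (trows T =P [::]) => [T0|T_ne]; first by exists 0; left.
have [_ [G' [T_G' <-]] v_min] : exists2 v, (exists G, dec_tree k det T G /\ tree_cost psi G = v)
    & forall v', (exists G, dec_tree k det T G /\ tree_cost psi G = v') -> v <= v'.
  by apply: ex_least; exists (tree_cost psi G), G.
exists (tree_cost psi G'); right; split => //; first by exists G'.
by move=> G2 T_G2; apply: v_min; exists G2.
Qed.

Section IrreducibleCovers.

Variables (k : nat) (psi : seq nat -> nat) (T : table) (n : nat).

Lemma irr_cover_private_row U a : irr_cover k psi T n U -> a \in U ->
  exists2 r, r \in trows T & sat T a r.1 /\ forall b, b \in U -> sat T b r.1 -> b = a.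
Proof.
move=> [[U_Omega U_cover] U_irr] U_a.
pose U' := [seq b <- U | b != a].
have U'_U : {subset U' <= U} by move=> b; rewrite mem_filter => /andP [].
have U_U' : ~ {subset U <= U'} by move=> /(_ _ U_a); rewrite mem_filter eqxx.
apply: NNPP => no_private; apply: (U_irr U' U'_U U_U'); split.
  by apply/allP => b /U'_U; apply: (allP U_Omega).
move=> r T_r; apply: NNPP => r_U'; apply: no_private; exists r => //.
have only_a : forall b, b \in U -> sat T b r.1 -> b = a.
  move=> b U_b b_r; apply: NNPP => b_a; apply: r_U'; exists b => //.
  by rewrite mem_filter U_b andbT; apply/eqP.
have [b U_b b_r] := U_cover _ T_r.
by split => //; rewrite -(only_a _ U_b b_r).
Qed.

Lemma irr_cover_size_le U : uniq U -> irr_cover k psi T n U -> size U <= size (trows T).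
Proof.
(* Each word of U is the owner of its private row. *)
move=> U_uniq U_irr; pose owner x := nth [::] U (find (fun b => sat T b x) U).
rewrite -(size_map fst) -(size_map owner); apply: uniq_leq_size U_uniq _ => a U_a.
have [r T_r [a_r only_a]] := irr_cover_private_row U_irr U_a.
have U_r : has (fun b => sat T b r.1) U by apply/hasP; exists a.
apply/mapP; exists r.1; first exact: map_f.
by rewrite /owner (only_a _ (mem_nth _ _) (nth_find _ U_r)) // -has_find.
Qed.

Lemma l_val_ge U : trows T <> [::] -> uniq U -> irr_cover k psi T n U ->
  exists2 l, l_val k psi T n l & size U <= l.
Proof.
move=> T_ne U_uniq U_irr.
have [l l_max] : exists l,
    is_max (fun s => exists U, [/\ uniq U, irr_cover k psi T n U & size U = s]) l.
  apply: (ex_is_max (b := size (trows T))); first by exists (size U), U.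
  by move=> _ [V [V_uniq V_irr <-]]; apply: irr_cover_size_le.
by exists l; [right | apply: l_max.2; exists U].
Qed.

Lemma irr_subcover U : is_cover k psi T n U ->
  exists V, [/\ uniq V, {subset V <= U} & irr_cover k psi T n V].
Proof.
move=> U_cover.
have undup_cover V : is_cover k psi T n V -> is_cover k psi T n (undup V).
  case=> V_Omega V_cover; split; first by apply/allP => a; rewrite mem_undup => /(allP V_Omega).
  by move=> r /V_cover [a V_a a_r]; exists a; rewrite ?mem_undup.
pose small s := exists V, [/\ uniq V, {subset V <= U}, is_cover k psi T n V & size V = s].
have [_ [V [V_uniq V_U V_cover <-]] V_min] : exists2 s, small s & forall s', small s' -> s <= s'.
  apply: ex_least; exists (size (undup U)), (undup U).
  by split => //; [exact: undup_uniq | move=> a; rewrite mem_undup | exact: undup_cover].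
exists V; split => //; split => // V' V'_V V_V' V'_cover.
have V'_small : size V <= size (undup V').
  apply: V_min; exists (undup V'); split => //; [exact: undup_uniq | | exact: undup_cover].
  by move=> a; rewrite mem_undup => /V'_V /V_U.
have undup_V'_V : {subset undup V' <= V} by move=> a; rewrite mem_undup => /V'_V.
have [_ V_eq] := uniq_min_size (undup_uniq V') undup_V'_V V'_small.
by apply: V_V' => a; rewrite -V_eq mem_undup.
Qed.

End IrreducibleCovers.

Lemma tree_paths_cover k psi T n det G : dec_tree k det T G -> tree_cost psi G <= n ->
  is_cover k psi T n (map fst (tree_paths G)).
Proof.
move=> [ok_G G_cover _] G_n; split.
  apply/allP => _ /mapP [p G_p ->]; apply/andP; split.
    exact: tree_paths_word_over ok_G G_p.
  by apply: leq_trans G_n; apply: leq_bigmax_seq G_p _.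
by move=> r /G_cover [p G_p p_r]; exists p.1; rewrite ?map_f.
Qed.

Lemma psi_d_le_l_mul k psi T n a v : 0 < k -> bounded_measure psi -> wf_table k T ->
  psi_opt k psi false T a -> a <= n -> psi_opt k psi true T v ->
  exists2 l, l_val k psi T n l & v <= l * n.
Proof.
move=> k_gt0 psi_bdd wf_T a_opt a_n [[T0 ->]|[T_ne _ v_min]]; first by exists 0 => //; left.
case: a_opt => [[T0 _] // | [_ [G [T_G G_a]] _]].
have G_n : tree_cost psi G <= n by rewrite G_a.
have [V [V_uniq V_G V_irr]] := irr_subcover (tree_paths_cover T_G G_n).
have [[V_Omega V_cover] _] := V_irr.
have [l T_l V_l] := l_val_ge T_ne V_uniq V_irr.
exists l => //.
have V_At a' : a' \in V -> {subset map fst a' <= tattrs T}.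
  by case/(allP V_Omega)/andP => /word_over_attrs.
have V_common a' : a' \in V -> exists d, common (subrows T a') d.
  move=> /V_G /mapP [p G_p ->]; exists p.2.
  by case: T_G => _ _ /(_ _ G_p) [-> |].
have V_n a' : a' \in V -> psi (map fst a') <= n by case/(allP V_Omega)/andP.
apply: leq_trans (v_min _ (dec_tree_cover_attrs k_gt0 wf_T V_At V_cover V_common)) _.
apply: leq_trans (tree_cost_cover_attrs _ _ _ _) _.
apply: leq_trans (psi_cover_attrs_le psi_bdd V_n) _.
by rewrite leq_mul2r V_l orbT.
Qed.

(* The label [:: 0] is a dummy, used only for rows that U does not cover. *)
Definition cover_labels (T : table) (U : seq (seq (nat * nat))) (x : seq nat) : seq nat :=
  let s := [seq i <- iota 0 (size U) | sat T (nth [::] U i) x] in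
  if s is [::] then [:: 0] else s.

Lemma cover_labels_dec T U x : dec_set (cover_labels T U x).
Proof.
rewrite /cover_labels; case E: [seq i <- _ | _] => [|i s] //; split => //.
by rewrite -E; apply: sorted_filter; [exact: ltn_trans | exact: iota_ltn_sorted].
Qed.

Lemma cover_labelsE T U a x : a \in U -> sat T a x ->
  cover_labels T U x = [seq i <- iota 0 (size U) | sat T (nth [::] U i) x].
Proof.
move=> U_a a_x; have : index a U \in [seq i <- iota 0 (size U) | sat T (nth [::] U i) x].
  by rewrite mem_filter nth_index // a_x mem_iota index_mem.
by rewrite /cover_labels; case: [seq i <- _ | _].
Qed.

Lemma mem_cover_labels T U a x : a \in U -> sat T a x -> index a U \in cover_labels T U x.
Proof.
by move=> U_a a_x; rewrite (cover_labelsE U_a a_x) mem_filter nth_index // a_x mem_iota index_mem.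
Qed.

Lemma cover_labels_private T U a x : uniq U -> a \in U -> sat T a x ->
  (forall b, b \in U -> sat T b x -> b = a) ->
  forall j, j \in cover_labels T U x -> j = index a U.
Proof.
move=> U_uniq U_a a_x only_a j; rewrite (cover_labelsE U_a a_x) mem_filter mem_iota.
by case/andP=> j_x /= j_lt; rewrite -(only_a _ (mem_nth [::] j_lt) j_x) index_uniq.
Qed.

Lemma dedup_first_id seen rs : uniq (map fst rs) ->
  (forall r, r \in rs -> r.1 \notin seen) -> dedup_first seen rs = rs.
Proof.
elim: rs seen => [|r rs IH] seen //= /andP [r_rs rs_uniq] rs_seen.
rewrite (negbTE (rs_seen r (mem_head _ _))) IH // => r' rs_r'.
rewrite in_cons negb_or rs_seen ?in_cons ?rs_r' ?orbT // andbT.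
by apply: contraNneq r_rs => <-; apply: map_f.
Qed.

Lemma I_op_nil k T : wf_table k T -> trows T <> [::] -> I_op [::] T = T.
Proof.
case: T => At rs [_ At_rs rs_uniq wf_rs] /= rs_ne.
have keep_all : [seq a \notin [::] | a <- At] = nseq (size At) true by elim: (At) => //= a s ->.
rewrite /I_op /= keep_all mask_true // ifN; last by rewrite At_rs; apply/eqP.
have rs_id : [seq (mask (nseq (size At) true) r.1, r.2) | r <- rs] = rs.
  rewrite -[RHS]map_id; apply/eq_in_map => -[x d] /wf_rs [size_x _ _] /=.
  by rewrite mask_true ?size_x.
by rewrite rs_id dedup_first_id.
Qed.

Definition relabel (T : table) (U : seq (seq (nat * nat))) : table :=
  J_op (cover_labels T U) T.

Lemma closure_of_relabel k T U : wf_table k T -> trows T <> [::] ->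
  closure_of T (relabel T U).
Proof.
move=> wf_T T_ne; exists [::], (cover_labels T U).
by split => //; [exact: cover_labels_dec | rewrite (I_op_nil wf_T T_ne)].
Qed.

Lemma subrows_J_op nu T w : subrows (J_op nu T) w = [seq (r.1, nu r.1) | r <- subrows T w].
Proof. by rewrite /subrows filter_map. Qed.

Fixpoint path_node (w : seq (nat * nat)) (d : nat) : node :=
  if w is l :: w' then Query l.1 [:: (l.2, path_node w' d)] else Leaf d.

Lemma node_paths_path_node w d : node_paths (path_node w d) = [:: (w, d)].
Proof. by elim: w => [|[f x] w IH] //; rewrite node_paths_Query_cons IH. Qed.

Lemma path_node_ok k At det w d : word_over k At w -> node_ok k At det (path_node w d).
Proof.
elim: w => [|[f x] w IH] /=; first by constructor.
case/andP=> /andP [At_f x_lt] w_over; constructor => // _ _ [[<- <-]|//].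
by split; last exact: IH.
Qed.

Lemma tree_paths_path_nodes (U : seq (seq (nat * nat))) (dec : seq (nat * nat) -> nat) :
  tree_paths [seq path_node a (dec a) | a <- U] = [seq (a, dec a) | a <- U].
Proof. by elim: U => [|a U IH] //=; rewrite tree_paths_cons node_paths_path_node IH. Qed.

Section Relabel.

Variables (k : nat) (psi : seq nat -> nat) (T : table) (n : nat) (U : seq (seq (nat * nat))).
Hypotheses (T_ne : trows T <> [::]) (U_uniq : uniq U) (U_irr : irr_cover k psi T n U).

Let T' := relabel T U.

Lemma relabel_ne : trows T' <> [::].
Proof. by rewrite /T' /=; case: (trows T) T_ne. Qed.

Lemma irr_cover_ne : U <> [::].
Proof.
case E: (trows T) T_ne => [//|r rs] _.
have [a U_a _] : exists2 a, a \in U & sat T a r.1 by apply: U_irr.1.2; rewrite E mem_head.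
by move=> U0; rewrite U0 in U_a.
Qed.

Lemma relabel_cover r : r \in trows T' -> exists2 a, a \in U & sat T' a r.1.
Proof. move=> /mapP [r0 T_r0 ->]; have [a U_a a_r0] := U_irr.1.2 _ T_r0; by exists a. Qed.

Lemma relabel_common a : a \in U -> common (subrows T' a) (index a U).
Proof.
move=> U_a; rewrite subrows_J_op; apply/allP => x /mapP [r].
by rewrite mem_filter => /andP [a_r _] ->; apply: mem_cover_labels.
Qed.

Lemma cover_word_over a : a \in U -> word_over k (tattrs T') a.
Proof. by case/(allP U_irr.1.1)/andP. Qed.

Lemma psi_a_relabel : exists a, psi_opt k psi false T' a /\ a <= n.
Proof.
pose G := [seq path_node a (index a U) | a <- U].
have T'_G : dec_tree k false T' G.
  split; last 1 first.
  - by move=> p; rewrite tree_paths_path_nodes => /mapP [a U_a ->]; right; apply: relabel_common.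
  - split => // [|v /List.in_map_iff [a [<- /InP /cover_word_over a_over]]].
      by rewrite /G; case: (U) irr_cover_ne.
    exact: path_node_ok.
  - move=> r /relabel_cover [a U_a a_r]; exists (a, index a U) => //.
    by rewrite tree_paths_path_nodes map_f.
have [c c_opt] := psi_opt_exists psi (ex_intro _ G T'_G).
exists c; split => //; case: c_opt => [[/relabel_ne //] | [_ _ c_min]].
apply: leq_trans (c_min _ T'_G) _.
apply/bigmax_leqP_seq => p; rewrite tree_paths_path_nodes => /mapP [a U_a ->] _.
by case/(allP U_irr.1.1)/andP: U_a.
Qed.

Lemma card_irr_cover_le_paths v : dec_tree k true T' [:: v] -> size U <= size (node_paths v).
Proof.
(* The private row of the i-th word keeps only the decision i, so i labels a leaf. *)
case=> _; rewrite tree_paths1 => T'_cover T'_dec.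
rewrite -(size_iota 0 (size U)) -(size_map snd); apply: uniq_leq_size (iota_uniq 0 _) _ => i.
rewrite mem_iota add0n => i_lt; have U_i := mem_nth [::] i_lt.
have [r T_r [i_r only_i]] := irr_cover_private_row U_irr U_i.
have T'_r : (r.1, cover_labels T U r.1) \in trows T' by apply: (map_f (fun r => (r.1, _))).
have [p v_p p_r] := T'_cover _ T'_r.
have p_rows : (r.1, cover_labels T U r.1) \in subrows T' p.1 by rewrite mem_filter p_r.
case: (T'_dec _ v_p) => [p0 | p_common]; first by rewrite p0 in p_rows.
have := cover_labels_private U_uniq U_i i_r only_i (allP p_common _ p_rows).
by rewrite index_uniq // => <-; apply: map_f.
Qed.

Lemma psi_d_relabel : 0 < k -> bounded_measure psi -> wf_table k T' ->
  exists2 v, psi_opt k psi true T' v & size U <= k ^ v.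
Proof.
move=> k_gt0 psi_bdd wf_T'.
have U_At a : a \in U -> {subset map fst a <= tattrs T'}.
  by move=> /cover_word_over /word_over_attrs.
have U_common a : a \in U -> exists d, common (subrows T' a) d.
  by move=> U_a; exists (index a U); apply: relabel_common.
have T'_det := dec_tree_cover_attrs k_gt0 wf_T' U_At relabel_cover U_common.
have [v v_opt] := psi_opt_exists psi (ex_intro _ _ T'_det).
exists v => //; case: v_opt => [[/relabel_ne] // | [_ [G [T'_G <-]] _]].
have [w G_w] : exists w, G = [:: w].
  by case: T'_G => -[_ /(_ isT)]; case: (G) => [|w [|]] // _ _ _ _; exists w.
rewrite G_w in T'_G *; have [[_ _ ok_w] _ _] := T'_G.
apply: leq_trans (card_irr_cover_le_paths T'_G) _.
apply: size_node_paths_det k_gt0 (ok_w w (or_introl erefl)) _ => p w_p.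
case: psi_bdd => _ _ _ _ psi_ge; rewrite -(size_map fst); apply: leq_trans (psi_ge _) _.
by apply: leq_bigmax_seq; rewrite ?tree_paths1.
Qed.

End Relabel.

Theorem lemma5 (k : nat) (A : table -> Prop) (psi : seq nat -> nat) :
  2 <= k -> closed_class k A -> nontrivial A -> bounded_measure psi ->
  (forall n, exists m, L_val k psi A n m) ->
  forall n m, L_val k psi A n m -> 0 < m ->
  exists h, H_val k psi A n h /\ Rle (log_base k m) (INR h).
Proof.
move=> k_gt1 [A_wf A_closed] _ psi_bdd _ n m [[T [A_T T_m]] L_max] m_gt0.
have k_gt0 : 0 < k by apply: ltnW.
case: T_m => [[_ m0] | [T_ne [[U [U_uniq U_irr U_m]] _]]]; first by rewrite m0 in m_gt0.
set T' := relabel T U.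
have A_T' : A T'.
  by apply/A_closed; exists T; split => //; apply: closure_of_relabel (A_wf _ A_T) T_ne.
have [a [a_opt a_n]] := psi_a_relabel T_ne U_irr.
have [v v_opt U_v] := psi_d_relabel T_ne U_uniq U_irr k_gt0 psi_bdd (A_wf _ A_T').
have [h [H_h h_max]] : exists h, H_val k psi A n h.
  apply: (ex_is_max (b := m * n)); first by exists v, T'; split => //; exists a.
  move=> x [T0 [A_T0 [a0 [a0_opt a0_n]] x_opt]].
  have [l T0_l x_l] := psi_d_le_l_mul k_gt0 psi_bdd (A_wf _ A_T0) a0_opt a0_n x_opt.
  by apply: leq_trans x_l _; rewrite leq_mul2r L_max ?orbT //; exists T0.
exists h; split; first by split.
apply: log_base_le => //; rewrite -U_m; apply: leq_trans U_v _; rewrite leq_exp2l //.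
by apply: h_max; exists T'; split => //; exists a.
Qed.
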